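(* Let $Y$ and $Z$ be finite-dimensional real or complex vector spaces, let $f\colon Y\to Y$ be a vector field, and let $F\colon Y\to Z$ be quadratic. Let $s\ge 1$, let $a_{ij},b_i$ ($i,j=1,\dots,s$) be scalars, let $h>0$, and suppose $y_0,y_1,Y_1,\dots,Y_s\in Y$ satisfy the Runge--Kutta equations \[ Y_i = y_0 + h\sum_{j=1}^s a_{ij} f(Y_j)\quad (i=1,\dots,s),\qquad y_1 = y_0 + h\sum_{i=1}^s b_i f(Y_i). \] Then for each $i=1,\dots,s$, \[ F(Y_i) = F(y_0) + h\sum_{j=1}^s a_{ij} F'(Y_j)f(Y_j) + \frac{h^2}{2}\sum_{j,k=1}^s \bigl(a_{ij}a_{ik} - a_{ij}a_{jk} - a_{ik}a_{kj}\bigr) F''\bigl(f(Y_j),f(Y_k)\bigr), \] and \[ F(y_1) = F(y_0) + h\sum_{i=1}^s b_i F'(Y_i)f(Y_i) + \frac{h^2}{2}\sum_{i,j=1}^s \bigl(b_ib_j - b_ia_{ij} - b_ja_{ji}\bigr) F''\bigl(f(Y_i),f(Y_j)\bigr). \]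
   Context: A map $F\colon Y\to Z$ is quadratic if for every $y_0\in Y$ one has $F(y)=F(y_0)+F'(y_0)(y-y_0)+\tfrac12F''(y-y_0,y-y_0)$ for all $y\in Y$, where $F''$ is a (constant) symmetric bilinear map $Y\times Y\to Z$ and $F'(y_0)$ is the derivative of $F$ at $y_0$. *)

From HB Require Import structures.
From mathcomp Require Import all_boot all_order all_algebra.
From mathcomp Require Import all_classical all_reals all_analysis.
Set Implicit Arguments. Unset Strict Implicit. Unset Printing Implicit Defensive.
Import Order.TTheory GRing.Theory Num.Theory.
Import numFieldNormedType.Exports.
Local Open Scope ring_scope.

Definition finite_dim (K : numFieldType) (Y : normedModType K) : Prop :=
  exists e : seq Y, forall y : Y,
    exists c : nat -> K, y = \sum_(i < size e) c i *: e`_i.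

(* F : Y -> Z is quadratic with (constant) second derivative F2:
   F2 is a symmetric bilinear map and, for every y0, F is differentiable at
   y0 and F y = F y0 + F'(y0)(y - y0) + 1/2 F2 (y - y0) (y - y0) for all y,
   where F'(y0) = 'd F y0 is the (Frechet) derivative of F at y0. *)
Definition quadratic (K : numFieldType) (Y Z : normedModType K)
    (F : Y -> Z) (F2 : Y -> Y -> Z) : Prop :=
  [/\ (forall u v, F2 u v = F2 v u),
      (forall (a : K) (u v w : Y), F2 (a *: u + v) w = a *: F2 u w + F2 v w) &
      (forall y0 : Y, differentiable F y0 /\
         forall y : Y,
           F y = F y0 + 'd F y0 (y - y0) + 2^-1 *: F2 (y - y0) (y - y0))].

From HB Require Import structures.
From mathcomp Require Import all_boot all_order all_algebra.
From mathcomp Require Import all_classical all_reals all_analysis.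
From mathcomp Require Import ring.
Import Order.TTheory GRing.Theory Num.Theory.
Import numFieldNormedType.Exports.
Local Open Scope ring_scope.

(* Comparing the Taylor expansions of F (y + v) around y and around y0 shows that
   the derivative of a quadratic map is affine: F'(y) = F'(y0) + F''(y - y0, .).
   Since each stage Y_j differs from y0 by h * sum_k a_jk f(Y_k), this gives
   F'(y0) f(Y_j) = F'(Y_j) f(Y_j) - h * sum_k a_jk F''(f(Y_k), f(Y_j)).
   Substituting into the exact expansion
   F(y0 + h u) = F(y0) + h F'(y0) u + h^2/2 F''(u, u), with u = sum_j c_j f(Y_j),
   yields the identity for arbitrary weights c: take c = (a_ij)_j for the stages
   and c = b for the update. *)

Section QuadraticMap.
Variables (K : numFieldType) (Y Z : normedModType K).
Variables (F : Y -> Z) (F2 : Y -> Y -> Z).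
Hypothesis quadF : quadratic F F2.

Lemma hessian_sym u v : F2 u v = F2 v u.
Proof. by case: quadF. Qed.

Lemma hessian_linearl a u v w : F2 (a *: u + v) w = a *: F2 u w + F2 v w.
Proof. by case: quadF. Qed.

Lemma quadratic_expand y0 y :
  F y = F y0 + 'd F y0 (y - y0) + 2^-1 *: F2 (y - y0) (y - y0).
Proof. by case: quadF => _ _ /(_ y0) []. Qed.

Lemma hessian0l w : F2 0 w = 0.
Proof.
have := hessian_linearl 1 0 0 w; rewrite !scale1r addr0 => F20.
by apply: (@addrI _ (F2 0 w)); rewrite addr0 -F20.
Qed.

Lemma hessianZl a u w : F2 (a *: u) w = a *: F2 u w.
Proof. by rewrite -[a *: u]addr0 hessian_linearl hessian0l addr0. Qed.

Lemma hessianDl u v w : F2 (u + v) w = F2 u w + F2 v w.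
Proof. by rewrite -[u]scale1r hessian_linearl !scale1r. Qed.

Lemma hessianZr a u w : F2 w (a *: u) = a *: F2 w u.
Proof. by rewrite hessian_sym hessianZl hessian_sym. Qed.

Lemma hessianDr u v w : F2 w (u + v) = F2 w u + F2 w v.
Proof. by rewrite !(hessian_sym w) hessianDl. Qed.

Lemma hessian_suml (T : Type) (r : seq T) (P : pred T) (g : T -> Y) w :
  F2 (\sum_(i <- r | P i) g i) w = \sum_(i <- r | P i) F2 (g i) w.
Proof. exact: (big_morph (F2^~ w) (fun u v => hessianDl u v w) (hessian0l w)). Qed.

Lemma hessian_sumr (T : Type) (r : seq T) (P : pred T) (g : T -> Y) w :
  F2 w (\sum_(i <- r | P i) g i) = \sum_(i <- r | P i) F2 w (g i).
Proof.
by rewrite hessian_sym hessian_suml; apply: eq_bigr => i _; rewrite hessian_sym.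
Qed.

Lemma hessian_sum (I : finType) (c d : I -> K) (x : I -> Y) :
  F2 (\sum_j c j *: x j) (\sum_k d k *: x k)
  = \sum_j \sum_k (c j * d k) *: F2 (x j) (x k).
Proof.
rewrite hessian_suml; apply: eq_bigr => j _.
rewrite hessianZl hessian_sumr scaler_sumr; apply: eq_bigr => k _.
by rewrite hessianZr scalerA.
Qed.

Lemma hessian_half_polar u v :
  2^-1 *: F2 (u + v) (u + v) = 2^-1 *: F2 u u + F2 u v + 2^-1 *: F2 v v.
Proof.
have halfD (z : Z) : (2^-1 : K) *: (z + z) = z.
  by rewrite -mulr2n -[z *+ 2]scaler_nat scalerA mulVf ?scale1r // pnatr_eq0.
rewrite hessianDl !hessianDr (hessian_sym v u) addrA -[_ + F2 u v + F2 u v]addrA.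
by rewrite scalerDr scalerDr halfD.
Qed.

Lemma diff_quadratic y0 y v : 'd F y v = 'd F y0 v + F2 (y - y0) v.
Proof.
have := quadratic_expand y0 (y + v).
rewrite {1}(quadratic_expand y (y + v)) {1}(quadratic_expand y0 y).
rewrite [y + v - y]addrAC subrr add0r [y + v - y0]addrAC.
move: (y - y0) => d; rewrite linearD hessian_half_polar => expand_eq.
apply: (addIr (2^-1 *: F2 v v)); apply: (addrI (F y0 + 'd F y0 d + 2^-1 *: F2 d d)).
rewrite addrA expand_eq !addrA; congr (_ + _ + _); exact: addrAC.
Qed.

Lemma quadratic_expandZ y0 t u :
  F (y0 + t *: u) = F y0 + t *: 'd F y0 u + (t ^+ 2 / 2) *: F2 u u.
Proof.
rewrite (quadratic_expand y0) [y0 + _ - y0]addrC addKr linearZ.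
by rewrite hessianZl hessianZr !scalerA; congr (_ + _ *: _); rewrite mulrC expr2.
Qed.

Lemma quadratic_runge_kutta (I : finType) (M : I -> I -> K) (c : I -> K) (h : K)
    (y0 : Y) (Ys x : I -> Y) :
  (forall j, Ys j = y0 + h *: \sum_k M j k *: x k) ->
  F (y0 + h *: \sum_j c j *: x j)
  = F y0 + h *: \sum_j c j *: 'd F (Ys j) (x j)
    + (h ^+ 2 / 2) *: \sum_j \sum_k
        (c j * c k - c j * M j k - c k * M k j) *: F2 (x j) (x k).
Proof.
move=> stages; set u := \sum_j c j *: x j.
set T := \sum_j \sum_k (c j * M j k) *: F2 (x j) (x k).
have diff_stages : \sum_j c j *: 'd F (Ys j) (x j) = 'd F y0 u + h *: T.
  rewrite linear_sum scaler_sumr -big_split; apply: eq_bigr => j _.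
  rewrite (diff_quadratic y0) stages [y0 + _ - y0]addrC addKr.
  rewrite linearZ scalerDr hessianZl hessian_suml !scaler_sumr; congr (_ + _).
  apply: eq_bigr => k _.
  by rewrite hessianZl hessian_sym !scalerA mulrCA.
have coeffs : \sum_j \sum_k (c j * c k - c j * M j k - c k * M k j) *: F2 (x j) (x k)
    = F2 u u - T - T.
  have T_swap : \sum_j \sum_k (c k * M k j) *: F2 (x j) (x k) = T.
    rewrite exchange_big; apply: eq_bigr => j _; apply: eq_bigr => k _.
    by rewrite hessian_sym.
  rewrite hessian_sum -{2}T_swap /T -!sumrB; apply: eq_bigr => j _.
  by rewrite -!sumrB; apply: eq_bigr => k _; rewrite !scalerBl.
have halves : (h ^+ 2 / 2) *: (F2 u u - T - T) = (h ^+ 2 / 2) *: F2 u u - (h * h) *: T.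
  rewrite -addrA -opprD scalerBr [_ *: (T + T)]scalerDr -scalerDl.
  by congr (_ - _ *: _); field.
rewrite quadratic_expandZ diff_stages coeffs halves scalerDr scalerA -!addrA.
by congr (_ + (_ + _)); rewrite addrC subrK.
Qed.

End QuadraticMap.

Theorem lemma2p1 (K : numFieldType) (Y Z : normedModType K)
  (f : Y -> Y) (F : Y -> Z) (F2 : Y -> Y -> Z) (s : nat)
  (a : 'I_s -> 'I_s -> K) (b : 'I_s -> K) (h : K)
  (y0 y1 : Y) (Ys : 'I_s -> Y) :
  finite_dim Y -> finite_dim Z ->
  quadratic F F2 ->
  (1 <= s)%N -> 0 < h ->
  (forall i, Ys i = y0 + h *: \sum_(j < s) a i j *: f (Ys j)) ->
  y1 = y0 + h *: \sum_(i < s) b i *: f (Ys i) ->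
  (forall i, F (Ys i) = F y0 + h *: \sum_(j < s) a i j *: 'd F (Ys j) (f (Ys j))
      + (h ^+ 2 / 2) *: \sum_(j < s) \sum_(k < s)
          (a i j * a i k - a i j * a j k - a i k * a k j) *: F2 (f (Ys j)) (f (Ys k)))
  /\
  F y1 = F y0 + h *: \sum_(i < s) b i *: 'd F (Ys i) (f (Ys i))
      + (h ^+ 2 / 2) *: \sum_(i < s) \sum_(j < s)
          (b i * b j - b i * a i j - b j * a j i) *: F2 (f (Ys i)) (f (Ys j)).
Proof.
move=> _ _ quadF _ _ stages ->.
have RK c := @quadratic_runge_kutta K Y Z F F2 quadF 'I_s a c h y0 Ys (fun j => f (Ys j)) stages.
by split=> [i|]; rewrite ?[in LHS]stages RK.
Qed.
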